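(* Let $K\ge3$ be an integer and $\alpha\in(2,+\infty)$. For every $\varepsilon>0$ there exist $p,q\in\operatorname{relint}(\Delta^K)$ such that \[ D_\alpha(p\Vert q)<\varepsilon\cdot\|p-q\|_1^2 . \]
   Context: $\Delta^K=\{p\in[0,1]^K:\sum_k p_k=1\}$, $\operatorname{relint}(\Delta^K)=\Delta^K\cap(0,1)^K$. For $p,q\in(0,+\infty)^K$ and $\alpha\notin\{0,1\}$, $D_\alpha(p\Vert q)=\frac1\alpha\sum_{k=1}^K\frac{p_k^\alpha+(\alpha-1)q_k^\alpha-\alpha p_kq_k^{\alpha-1}}{\alpha-1}$, which is the Bregman divergence of $-S_\alpha$ where $S_\alpha(p)=\frac{\sum_kp_k^\alpha}{\alpha(1-\alpha)}$. $\|x\|_1=\sum_k|x_k|$. *)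

From mathcomp Require Import all_boot all_order all_algebra.
From mathcomp Require Import all_classical all_reals all_analysis.
Set Implicit Arguments. Unset Strict Implicit. Unset Printing Implicit Defensive.
Import Order.TTheory GRing.Theory Num.Theory.
Local Open Scope ring_scope.

Definition relint_simplex (R : realType) (K : nat) (p : 'I_K -> R) : Prop :=
  (forall k, 0 < p k < 1) /\ \sum_(k < K) p k = 1.

Definition alpha_div (R : realType) (K : nat) (alpha : R) (p q : 'I_K -> R) : R :=
  alpha^-1 * \sum_(k < K)
    ((p k `^ alpha + (alpha - 1) * q k `^ alpha
      - alpha * p k * q k `^ (alpha - 1)) / (alpha - 1)).

Definition l1_dist (R : realType) (K : nat) (p q : 'I_K -> R) : R :=
  \sum_(k < K) `|p k - q k|.

From mathcomp Require Import all_boot all_order all_algebra.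
From mathcomp Require Import all_classical all_reals all_analysis.
From mathcomp Require Import ring lra.
Set Implicit Arguments. Unset Strict Implicit. Unset Printing Implicit Defensive.
Import Order.TTheory GRing.Theory Num.Theory.
Local Open Scope ring_scope.

(* Swapping two small masses [s/2] and [s] between two coordinates, the
   remaining mass being spread uniformly over the other [K - 2 >= 1]
   coordinates, gives points [p], [q] of the open simplex with
   [||p - q||_1 = s], while each of the two perturbed coordinates contributes
   at most [s^alpha / (alpha - 1)] to [D_alpha(p||q)] and the others nothing.
   Hence [D_alpha(p||q) <= (2 s^(alpha-2) / (alpha-1)) ||p - q||_1^2], and the
   factor tends to 0 with [s] because [alpha > 2]. *)

Section AlphaDivergenceSmall.
Variable R : realType.

Definition lead2 (K : nat) (x y r : R) (k : 'I_K) : R :=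
  if val k == 0%N then x else if val k == 1%N then y else r.

Lemma sum_lead2 (K : nat) (G : R -> R -> R) (x y r x' y' r' : R) :
  (2 <= K)%N ->
  \sum_(k < K) G (lead2 x y r k) (lead2 x' y' r' k) =
  G x x' + G y y' + G r r' *+ (K - 2).
Proof.
case: K => [|[|n]] // _.
rewrite 2!big_ord_recl addrA /= subn2 /=.
congr (_ + _); rewrite (eq_bigr (fun=> G r r')); last by [].
by rewrite sumr_const card_ord.
Qed.

Lemma relint_simplexP (K : nat) (p : 'I_K -> R) :
  (2 <= K)%N -> (forall k, 0 < p k) -> \sum_(k < K) p k = 1 ->
  relint_simplex p.
Proof.
move=> K2 p_gt0 p_sum; split => // k; rewrite p_gt0 /= -p_sum.
pose j : 'I_K := Ordinal (leq_ltn_trans (leq_b1 (val k == 0%N)) K2).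
have jk : j != k by rewrite -(inj_eq val_inj) /=; case: (val k) => [|[|n]].
rewrite (bigD1 k) //= ltrDl (bigD1 j) //= ltr_wpDr ?p_gt0 //.
by apply: sumr_ge0 => i _; exact: ltW.
Qed.

Lemma lead2_relint (K : nat) (x y r : R) :
  (2 <= K)%N -> 0 < x -> 0 < y -> 0 < r -> x + y + r *+ (K - 2) = 1 ->
  relint_simplex (lead2 (K := K) x y r).
Proof.
move=> K2 x0 y0 r0 xyr1; apply: relint_simplexP => //.
  by move=> k; rewrite /lead2; case: ifP => // _; case: ifP.
by rewrite (sum_lead2 (fun u _ => u) x y r x y r).
Qed.

Definition alpha_div_term (a x y : R) : R :=
  a^-1 * ((x `^ a + (a - 1) * y `^ a - a * x * y `^ (a - 1)) / (a - 1)).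

Lemma alpha_divE (K : nat) (a : R) (p q : 'I_K -> R) :
  alpha_div a p q = \sum_(k < K) alpha_div_term a (p k) (q k).
Proof. by rewrite /alpha_div mulr_sumr. Qed.

Lemma alpha_div_term_id (a x : R) : 0 < a -> 0 <= x -> alpha_div_term a x x = 0.
Proof.
move=> a0 x0; rewrite /alpha_div_term -mulrA mulr_powRB1 //.
by rewrite [_ - _](_ : _ = 0) ?mul0r ?mulr0 //; ring.
Qed.

Lemma alpha_div_term_le (a x y m : R) :
  1 < a -> 0 <= x <= m -> 0 <= y <= m -> alpha_div_term a x y <= m `^ a / (a - 1).
Proof.
move=> a1 /andP[x0 xm] /andP[y0 ym].
have a0 : 0 < a by lra.
have a10 : 0 < a - 1 by lra.
have powR_le z : 0 <= z <= m -> z `^ a <= m `^ a.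
  case/andP=> z0 zm; apply: ge0_ler_powR => //; first exact: ltW.
  by rewrite nnegrE (le_trans z0).
have cross_ge0 : 0 <= a * x * y `^ (a - 1).
  by rewrite mulr_ge0 ?powR_ge0 // mulr_ge0 // ltW.
have num_le : x `^ a + (a - 1) * y `^ a - a * x * y `^ (a - 1) <= a * m `^ a.
  have xa : x `^ a <= m `^ a by apply: powR_le; rewrite x0 xm.
  have ya : (a - 1) * y `^ a <= (a - 1) * m `^ a.
    by rewrite ler_wpM2l ?(ltW a10) //; apply: powR_le; rewrite y0 ym.
  lra.
rewrite /alpha_div_term -[leRHS](mulKf (lt0r_neq0 a0)) [X in _ <= _ * X]mulrA.
by rewrite ler_wpM2l ?invr_ge0 ?(ltW a0) // ler_wpM2r ?invr_ge0 ?(ltW a10).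
Qed.

Lemma l1_dist_lead2 (K : nat) (x y r x' y' : R) : (2 <= K)%N ->
  l1_dist (lead2 (K := K) x y r) (lead2 x' y' r) = `|x - x'| + `|y - y'|.
Proof.
move=> K2; apply: eq_trans (sum_lead2 (fun u v => `|u - v|) _ _ _ _ _ _ K2) _.
by rewrite subrr normr0 mul0rn addr0.
Qed.

Lemma alpha_div_lead2 (K : nat) (a x y r x' y' : R) : (2 <= K)%N -> 0 < a -> 0 <= r ->
  alpha_div a (lead2 (K := K) x y r) (lead2 x' y' r) =
  alpha_div_term a x x' + alpha_div_term a y y'.
Proof.
move=> K2 a0 r0; rewrite alpha_divE.
apply: eq_trans (sum_lead2 (alpha_div_term a) _ _ _ _ _ _ K2) _.
by rewrite alpha_div_term_id // mul0rn addr0.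
Qed.

Lemma powR_lt_near0 (b c m : R) :
  0 < b -> 0 < c -> 0 < m -> exists2 s, 0 < s <= m & s `^ b < c.
Proof.
move=> b0 c0 m0; pose s := Num.min m ((c / 2) `^ b^-1).
have c20 : 0 < c / 2 by rewrite divr_gt0.
have s0 : 0 < s by rewrite lt_min m0 powR_gt0.
have s_le : s <= (c / 2) `^ b^-1 by rewrite ge_min lexx orbT.
exists s; first by rewrite s0 ge_min lexx.
apply: (@le_lt_trans _ _ (c / 2)); last lra.
have -> : c / 2 = ((c / 2) `^ b^-1) `^ b.
  by rewrite -powRrM mulVf ?lt0r_neq0 // powRr1 // ltW.
apply: ge0_ler_powR => //; rewrite ?nnegrE ?powR_ge0 //; exact: ltW.
Qed.

Lemma powR_split2 (s a : R) : 0 < s -> s `^ a = s ^+ 2 * s `^ (a - 2).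
Proof.
move=> s0; rewrite -powR_mulrn ?(ltW s0) // -powRD; first by rewrite addrC subrK.
by apply/implyP => _; exact: lt0r_neq0.
Qed.

End AlphaDivergenceSmall.

Theorem theorem2 (R : realType) (K : nat) (alpha : R) :
  (3 <= K)%N -> 2 < alpha ->
  forall eps : R, 0 < eps ->
  exists p q : 'I_K -> R,
    relint_simplex p /\ relint_simplex q /\
    alpha_div alpha p q < eps * (l1_dist p q) ^+ 2.
Proof.
move=> K3 a2 eps eps0; have K2 := ltnW K3.
have [a0 a1] : 0 < alpha /\ 1 < alpha by split; lra.
have [s /andP[s0 s_half] s_pow] :
    exists2 s, 0 < s <= 2^-1 & s `^ (alpha - 2) < eps * (alpha - 1) / 2.
  by apply: powR_lt_near0; rewrite ?invr_gt0 ?divr_gt0 ?mulr_gt0 //; lra.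
pose r := (1 - 3 * s / 2) / (K - 2)%:R.
have r_mass : r *+ (K - 2) = 1 - 3 * s / 2.
  by rewrite -mulr_natr divfK // pnatr_eq0 -lt0n subn_gt0.
have r0 : 0 < r by rewrite divr_gt0 ?ltr0n ?subn_gt0 //; lra.
exists (lead2 (s / 2) s r), (lead2 s (s / 2) r).
split; [|split].
- by apply: lead2_relint => //; rewrite ?r_mass; lra.
- by apply: lead2_relint => //; rewrite ?r_mass; lra.
rewrite l1_dist_lead2 // alpha_div_lead2 ?(ltW r0) //.
have -> : `|s / 2 - s| + `|s - s / 2| = s by rewrite ler0_norm ?ger0_norm; lra.
have term_le x y : 0 <= x <= s -> 0 <= y <= s ->
    alpha_div_term alpha x y <= s `^ alpha / (alpha - 1).
  exact: alpha_div_term_le.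
apply: le_lt_trans (lerD (term_le _ _ _ _) (term_le _ _ _ _)) _;
  try by apply/andP; split; lra.
have pow_small : s `^ (alpha - 2) / (alpha - 1) < eps / 2.
  by rewrite ltr_pdivrMr; lra.
have : s ^+ 2 * (s `^ (alpha - 2) / (alpha - 1)) < s ^+ 2 * (eps / 2).
  by rewrite ltr_pM2l ?exprn_gt0.
rewrite (powR_split2 alpha s0) -[_ * _ / (alpha - 1)]mulrA; lra.
Qed.
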